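(* Let $t\ge 4$, $r\ge 3$ and $0\le d\le r-1$ be integers. Then there exists a sufficiently small constant $c=c(t,r)>0$ such that $$C_r(n,S_r(d,t))\ge \min\left\{c\,n^{\frac{1}{2(r-d)+1}},\ c\,n^{\frac{1}{d+1}}\right\}.$$
   Context: An $r$-graph is an $r$-uniform hypergraph; $K_n^{(r)}$ is the complete $r$-graph on $n$ vertices. A copy of an $r$-graph $H$ in $K_n^{(r)}$ is a subhypergraph isomorphic to $H$. An $(n,r,H)$-local coloring with $k$ colors is a family of edge-colorings $f_v:E(K_n^{(r)})\to[k]$, one per vertex $v$, such that for every copy $T$ of $H$ there is $u\in V(T)$ with $f_u$ injective on $E(T)$. $C_r(n,H)$ is the minimum such $k$. A sunflower $S_r(d,m)$ is an $r$-graph with $m$ edges $e_1,\dots,e_m$ such that $e_i\cap e_j=D$ for all distinct $i,j$, where $D$ is a fixed set of $d$ vertices (the core). *)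

From mathcomp Require Import all_boot.
From Stdlib Require Import ClassicalDescription.

Unset Printing Implicit Defensive.

(* Vertices of K_n^(r) are 'I_n; edges are the r-subsets of 'I_n. *)
Definition rsets (n r : nat) : {set {set 'I_n}} := [set e : {set 'I_n} | #|e| == r].

(* A family E of edges forms a sunflower S_r(d,m): it has m edges and there is a
   core D of d vertices with e :&: e' = D for all distinct e, e' in E.
   (Edge size r is enforced by E \subset rsets n r below.) *)
Definition is_sunflower (T : finType) (d m : nat) (E : {set {set T}}) : Prop :=
  #|E| = m /\
  exists D : {set T}, #|D| = d /\
    forall e e', e \in E -> e' \in E -> e != e' -> e :&: e' = D.

Definition sunflower_copy (n r d m : nat) (E : {set {set 'I_n}}) : Prop :=
  E \subset rsets n r /\ is_sunflower _ d m E.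

Definition vert (n : nat) (E : {set {set 'I_n}}) : {set 'I_n} :=
  \bigcup_(e in E) e.

(* An (n, r, S_r(d,m))-local coloring with k colors: one edge-coloring
   f v : E(K_n^(r)) -> [k] per vertex v (colors 0..k-1; values off the r-sets
   are irrelevant), such that every copy T has a vertex u in V(T) with f u
   injective on E(T). *)
Definition local_coloring (n r d m k : nat) (f : 'I_n -> {set 'I_n} -> nat) : Prop :=
  (forall v e, e \in rsets n r -> f v e < k) /\
  forall E, sunflower_copy n r d m E ->
    exists2 u, u \in vert n E & {in E &, injective (f u)}.

Definition has_local_coloring (n r d m k : nat) : Prop :=
  exists f, local_coloring n r d m k f.

Definition has_local_coloringb (n r d m : nat) : pred nat :=
  fun k => if excluded_middle_informative (has_local_coloring n r d m k)
           then true else false.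

(* C_r(n, S_r(d,m)) = the minimum k admitting a local coloring
   (set to 0 by convention if no such k exists; this never happens in the
   range of the theorem). *)
Definition C_sun (n r d m : nat) : nat :=
  match excluded_middle_informative (exists k, has_local_coloringb n r d m k) with
  | left H => ex_minn H
  | right _ => 0
  end.

From Stdlib Require Import ClassicalDescription.
From mathcomp Require Import all_boot zify.

(* Suppose k colours suffice and fix a core D of d vertices.  Pack the
   complement of D with disjoint (r-d)-petals and, pigeonholing over the
   colourings of the d core vertices, keep 2k+2 petals on which every core
   vertex is monochromatic.  An outside vertex misses all but at most one of
   them, so it gives two of them the same colour; averaging over pairs yields
   petals b1 <> b2 and at least (n-d)/(4(k+1)) outside vertices colouring
   D+b1 and D+b2 alike.  Pack those vertices with petals and, pigeonholing
   over the at most 2(r-d) vertices of b1 and b2, keep t-2 petals on which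
   each of them is monochromatic.  With b1 and b2 they form a copy of
   S_r(d,t) in which every vertex repeats a colour, which is impossible.
   Hence n is O(k^(d+1) + k^(2(r-d)+1)), and taking roots gives the bound. *)

Set Implicit Arguments.
Unset Strict Implicit.

Lemma card_incidences (V I : finType) (U : {set V}) (P : {set I}) (R : V -> I -> bool) :
  \sum_(u in U) #|[set i in P | R u i]| = \sum_(i in P) #|[set u in U | R u i]|.
Proof.
have card_sep (J : finType) (A : {set J}) (Q : pred J) :
    #|[set x in A | Q x]| = \sum_(x in A) Q x.
  rewrite -sum1_card big_mkcond [RHS]big_mkcond; apply: eq_bigr => x _.
  by rewrite inE; case: (x \in A); case: (Q x).
under eq_bigr do rewrite card_sep.
by rewrite exchange_big; apply: eq_bigr => i _; rewrite card_sep.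
Qed.

Lemma exists_ge_average (I : finType) (P : {set I}) (w : I -> nat) i0 :
  i0 \in P -> exists2 i, i \in P & \sum_(j in P) w j <= #|P| * w i.
Proof.
move=> Pi0; case: (@arg_maxnP _ i0 (mem P) w Pi0) => i Pi max_i.
exists i => //; rewrite -sum_nat_const; exact: leq_sum.
Qed.

Lemma exists_subset_card (T : finType) (A : {set T}) m :
  m <= #|A| -> exists2 B : {set T}, B \subset A & #|B| = m.
Proof.
case/card_geqP => s [us <- sA]; exists [set x in s].
  by apply/subsetP => x; rewrite inE; exact: sA.
by rewrite cardsE; apply/card_uniqP.
Qed.

Lemma big_color_class (I : finType) (A : {set I}) (c : I -> nat) k :
  0 < k -> {in A, forall i, c i < k} -> exists j, #|A| <= k * #|[set i in A | c i == j]|.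
Proof.
move=> k_gt0 cA.
have [j _ avg] := exists_ge_average (fun j : 'I_k => #|[set i in A | c i == j]|)
  (in_setT (Ordinal k_gt0)).
exists (val j); move: avg; rewrite cardsT card_ord; apply: leq_trans.
rewrite -(card_incidences A [set: 'I_k] (fun i (j : 'I_k) => c i == j)) -sum1_card.
by apply: leq_sum => i iA; apply/card_gt0P; exists (Ordinal (cA i iA)); rewrite !inE /=.
Qed.

Lemma big_common_color_class (V : eqType) (I : finType) (g : V -> I -> nat) k
    (ws : seq V) (A : {set I}) :
  0 < k -> (forall v, {in A, forall i, g v i < k}) ->
  exists2 B : {set I}, B \subset A &
    #|A| <= k ^ size ws * #|B| /\ {in ws, forall v, {in B &, forall i j, g v i = g v j}}.
Proof.
move=> k_gt0; elim: ws A => [|v ws IH] A gA.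
  by exists A => //; rewrite mul1n.
have [j cls_j] := big_color_class k_gt0 (gA v).
set C := [set i in A | g v i == j] in cls_j.
have CA : C \subset A by apply/subsetP => i; rewrite inE => /andP [].
have [B BC [cardB constB]] := IH C (fun w i iC => gA w i (subsetP CA i iC)).
exists B; first exact: subset_trans BC CA.
split; first by rewrite expnS -mulnA (leq_trans cls_j) // leq_mul2l cardB orbT.
move=> w /[1!inE] /orP [/eqP -> | w_ws]; last exact: constB.
move=> i i' /(subsetP BC) /[1!inE] /andP [_ /eqP ->].
by move=> /(subsetP BC) /[1!inE] /andP [_ /eqP ->].
Qed.

Lemma card_le_repeated_color (I : finType) (S : {set I}) (c : I -> nat) k :
  {in S, forall i, c i < k} ->
  #|S| <= k + #|[set pq in setX S S | (pq.1 != pq.2) && (c pq.1 == c pq.2)]|.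
Proof.
move=> cS; set pairs := [set pq in _ | _].
set Rep := [set pq.1 | pq in pairs].
have injS : {in S :\: Rep &, injective c}.
  move=> i j /setDP [iS iR] /setDP [jS _] cij; apply/eqP; apply: contraNT iR => nij.
  by apply/imsetP; exists (i, j); rewrite // !inE iS jS nij cij eqxx.
have uniq_c : uniq [seq c i | i <- enum (S :\: Rep)].
  by rewrite map_inj_in_uniq ?enum_uniq // => i j; rewrite !mem_enum; exact: injS.
have le_k : #|S :\: Rep| <= k.
  have := uniq_leq_size uniq_c (s2 := iota 0 k).
  rewrite size_map size_iota -cardE; apply => _ /mapP [i /[!mem_enum] /setDP [iS _] ->].
  by rewrite mem_iota cS.
have le_pairs : #|S :&: Rep| <= #|pairs|.
  exact: leq_trans (subset_leq_card (subsetIr S Rep)) (leq_imset_card _ _).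
by have := cardsID Rep S; lia.
Qed.

Definition packing (T : finType) (s : nat) (X : {set T}) (P : {set {set T}}) : Prop :=
  {in P, forall Y : {set T}, Y \subset X /\ #|Y| = s} /\
  {in P &, forall Y Z : {set T}, Y != Z -> [disjoint Y & Z]}.

Section Packings.
Variables (T : finType) (s : nat).
Implicit Types (X Y Z : {set T}) (P Q : {set {set T}}).

Lemma packing_subfamily X P Q : Q \subset P -> packing s X P -> packing s X Q.
Proof.
move=> /subsetP QP [PX Pdis]; split=> [Y /QP /PX // | Y Z /QP YP /QP ZP]; exact: Pdis.
Qed.

Lemma packing_supset X X' P : X \subset X' -> packing s X P -> packing s X' P.
Proof. by move=> XX' [PX Pdis]; split=> // Y /PX [YX ->]; rewrite (subset_trans YX XX'). Qed.

Lemma packing_pair Y Z :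
  [disjoint Y & Z] -> #|Y| = s -> #|Z| = s -> packing s (Y :|: Z) [set Y; Z].
Proof.
move=> YZ cY cZ; split.
  by move=> W /set2P [] ->; rewrite ?subsetUl ?subsetUr.
move=> W W' /set2P [] -> /set2P [] ->; rewrite ?eqxx // => _.
by rewrite disjoint_sym.
Qed.

Lemma packing_setU X1 X2 P1 P2 : [disjoint X1 & X2] ->
  packing s X1 P1 -> packing s X2 P2 -> packing s (X1 :|: X2) (P1 :|: P2).
Proof.
move=> X12 [P1X P1dis] [P2X P2dis]; split.
  move=> Y /setUP [/P1X | /P2X] [YX ->]; split=> //; apply: subset_trans YX _.
    exact: subsetUl.
  exact: subsetUr.
have cross Y Z : Y \in P1 -> Z \in P2 -> [disjoint Y & Z].
  move=> /P1X [YX _] /P2X [ZX _].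
  by apply: disjointWl YX _; apply: disjointWr ZX _.
move=> Y Z /setUP [YP | YP] /setUP [ZP | ZP]; [exact: P1dis | | | exact: P2dis].
  by move=> _; apply: cross.
by move=> _; rewrite disjoint_sym; apply: cross.
Qed.

Lemma card_packing_setU X1 X2 P1 P2 : 0 < s -> [disjoint X1 & X2] ->
  packing s X1 P1 -> packing s X2 P2 -> #|P1 :|: P2| = #|P1| + #|P2|.
Proof.
move=> s_gt0 X12 [P1X _] [P2X _].
suff /eqP P12 : P1 :&: P2 == set0 by rewrite cardsU P12 cards0 subn0.
apply/set0Pn => -[Y /setIP [/P1X [YX1 cY] /P2X [YX2 _]]].
have : 0 < #|Y| by rewrite cY.
rewrite card_gt0 => /set0Pn [y yY].
by move: X12 => /disjointFr /(_ (subsetP YX1 y yY)); rewrite (subsetP YX2 y yY).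
Qed.

Lemma card_packing_avoiding X P (u : T) :
  packing s X P -> #|P| <= (#|[set Y in P | u \notin Y]|).+1.
Proof.
move=> [_ Pdis]; rewrite -(cardsID [set Y : {set T} | u \in Y] P).
have -> : P :\: [set Y : {set T} | u \in Y] = [set Y in P | u \notin Y].
  by apply/setP => Y; rewrite !inE andbC.
rewrite -add1n leq_add2r.
apply/card_le1_eqP => Y Z /[!inE] /andP [YP uY] /andP [ZP uZ].
apply/eqP; apply: contraT => nYZ.
by rewrite -(disjointFr (Pdis Z Y ZP YP nYZ) uZ) uY.
Qed.

Lemma exists_packing X q : 0 < s -> s * q <= #|X| -> exists2 P, packing s X P & #|P| = q.
Proof.
move=> s_gt0; elim: q X => [|q IH] X le_sq.
  by exists set0; [split=> Y; rewrite inE | rewrite cards0].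
have [Y YX cY] := exists_subset_card (leq_trans (leq_pmulr s (ltn0Sn q)) le_sq).
have [P packP cP] : exists2 P, packing s (X :\: Y) P & #|P| = q.
  by apply: IH; rewrite cardsDS // cY; move: le_sq; rewrite mulnS; lia.
have packY : packing s Y [set Y].
  by split=> [W /set1P -> | W W' /set1P -> /set1P ->]; rewrite ?eqxx.
have YXY : [disjoint Y & X :\: Y] by rewrite disjoint_sym disjoints_subset setDE subsetIr.
exists ([set Y] :|: P); last by rewrite (card_packing_setU s_gt0 YXY packY packP) cards1 cP.
by apply: packing_supset (packing_setU YXY packY packP); rewrite subUset YX subsetDl.
Qed.
End Packings.

Lemma setU_inj_compl (T : finType) (D Y Z : {set T}) :
  Y \subset ~: D -> Z \subset ~: D -> D :|: Y = D :|: Z -> Y = Z.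
Proof.
have UK (X : {set T}) : X \subset ~: D -> (D :|: X) :\: D = X.
  by rewrite -disjoints_subset => XD; rewrite setDUl setDv set0U; apply/setDidPl.
by move=> YD ZD eYZ; rewrite -(UK Y YD) eYZ UK.
Qed.

(* The core, (r-d) k^d (2k+2) vertices for the first packing, and 4(k+1) times
   the (r-d) k^(2(r-d)) (t-2) agreeing vertices needed by the second one. *)
Definition sunflower_threshold (r d t k : nat) : nat :=
  d + (r - d) * (k ^ d * (2 * k.+1)) + 4 * k.+1 * ((r - d) * (k ^ (2 * (r - d)) * (t - 2))).

Section SunflowerColoring.
Variables (n r d t k : nat) (f : 'I_n -> {set 'I_n} -> nat).
Hypotheses (t_ge4 : 4 <= t) (d_lt_r : d < r) (k_gt0 : 0 < k).
Hypothesis f_loc : local_coloring n r d t k f.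
Variable D : {set 'I_n}.
Hypothesis cardD : #|D| = d.
Implicit Types (X W Y Z : {set 'I_n}) (Pet : {set {set 'I_n}}) (u : 'I_n).

Local Notation s := (r - d).
Local Notation col u Y := (f u (D :|: Y)).

Definition agreeing (b1 b2 : {set 'I_n}) : {set 'I_n} :=
  [set u in ~: (D :|: (b1 :|: b2)) | col u b1 == col u b2].

Lemma petal_edge Y : Y \subset ~: D -> #|Y| = s -> D :|: Y \in rsets n r.
Proof.
rewrite -disjoints_subset => YD cY.
by rewrite inE cardsU disjoint_sym in YD *; rewrite (disjoint_setI0 YD) cards0 cardD cY; lia.
Qed.

Lemma col_lt u Y : Y \subset ~: D -> #|Y| = s -> col u Y < k.
Proof. by move=> YD cY; apply: f_loc.1; apply: petal_edge. Qed.

Lemma card_compl_core : #|~: D| = n - d.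
Proof. by have := cardsC D; rewrite cardD card_ord; lia. Qed.

Lemma sunflower_copy_petals Pet :
  packing s (~: D) Pet -> #|Pet| = t -> sunflower_copy n r d t [set D :|: Y | Y in Pet].
Proof.
move=> [PetD Petdis] cPet.
have inj : {in Pet &, injective (fun Y => D :|: Y)}.
  by move=> Y Z /PetD [YD _] /PetD [ZD _]; apply: setU_inj_compl.
split.
  by apply/subsetP => _ /imsetP [Y /PetD [YD cY] ->]; apply: petal_edge.
split; first by rewrite card_in_imset.
exists D; split=> // _ _ /imsetP [Y YP ->] /imsetP [Z ZP ->] nYZ.
have /disjoint_setI0 YZ0 : [disjoint Y & Z] by apply: Petdis => //; apply: contraNneq nYZ => ->.
by rewrite -setUIr YZ0 setU0.
Qed.

Lemma rainbow_vertex Pet : packing s (~: D) Pet -> #|Pet| = t ->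
  exists2 u, u \in D :|: cover Pet & {in Pet &, injective (fun Y => col u Y)}.
Proof.
move=> packP cPet; have [u uV inj] := f_loc.2 _ (sunflower_copy_petals packP cPet).
exists u.
  move: uV => /bigcupP [_ /imsetP [Y YP ->]] /setUP [uD | uY]; rewrite inE ?uD //.
  by apply/orP; right; apply/bigcupP; exists Y.
move=> Y Z YP ZP /(inj _ _ (imset_f _ YP) (imset_f _ ZP)).
by apply: setU_inj_compl; [have [] := packP.1 Y YP | have [] := packP.1 Z ZP].
Qed.

Lemma uniform_packing X W m : X \subset ~: D -> s * (k ^ #|W| * m) <= #|X| ->
  exists2 P, packing s X P /\ #|P| = m &
    {in W, forall w, {in P &, forall Y Z, col w Y = col w Z}}.
Proof.
move=> XD le_X; have s_gt0 : 0 < s by rewrite subn_gt0.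
have [F packF cF] := exists_packing s_gt0 le_X.
have colF w : {in F, forall Y, col w Y < k}.
  by move=> Y /packF.1 [YX cY]; apply: col_lt => //; apply: subset_trans XD.
have [B BF [cB constB]] := big_common_color_class (enum W) k_gt0 colF.
rewrite cF -cardE leq_pmul2l ?expn_gt0 ?k_gt0 // in cB.
have [P PB cP] := exists_subset_card cB.
exists P; first by split=> //; apply: packing_subfamily (subset_trans PB BF) packF.
move=> w wW Y Z YP ZP; apply: constB; rewrite ?mem_enum //; exact: subsetP PB _ _.
Qed.

Lemma card_agreeing_pairs S u : packing s (~: D) S -> u \in ~: D ->
  #|S| <= k.+1 + #|[set pq in setX S S | (pq.1 != pq.2) && (u \in agreeing pq.1 pq.2)]|.
Proof.
move=> packS uD.
set S' := [set Y in S | u \notin Y].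
have S'S : S' \subset S by apply/subsetP => Y; rewrite inE => /andP [].
have colS' : {in S', forall Y, col u Y < k}.
  by move=> Y /(subsetP S'S) /packS.1 [YD cY]; apply: col_lt.
apply: leq_trans (card_packing_avoiding u packS) _; rewrite -/S' addSn ltnS addnC.
apply: leq_trans (card_le_repeated_color colS') _; rewrite addnC leq_add2r.
apply/subset_leq_card/subsetP => -[Y Z]; rewrite !inE /=.
case/and3P => /and3P [/andP [-> uY] -> uZ] -> ->.
by move: uD; rewrite inE => uD; rewrite (negbTE uD) (negbTE uY) (negbTE uZ).
Qed.

Lemma popular_pair S : packing s (~: D) S -> #|S| = 2 * k.+1 ->
  exists b1 b2, [/\ b1 \in S, b2 \in S, b1 != b2 & n - d <= 4 * k.+1 * #|agreeing b1 b2|].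
Proof.
move=> packS cS.
set PP := [set pq in setX S S | pq.1 != pq.2].
have /card_gt1P [Y0 [Z0 [Y0S Z0S nYZ0]]] : 1 < #|S| by rewrite cS; lia.
have PP0 : (Y0, Z0) \in PP by rewrite !inE /= Y0S Z0S nYZ0.
pose R u (pq : {set 'I_n} * {set 'I_n}) := u \in agreeing pq.1 pq.2.
have [[b1 b2] /[!inE] /= /andP [/andP [b1S b2S] nb] avg] :=
  exists_ge_average (fun pq => #|[set u in ~: D | R u pq]|) PP0.
exists b1, b2; split=> //.
have cPP : #|PP| <= 2 * k.+1 * (2 * k.+1).
  by rewrite -cS -cardsX; apply/subset_leq_card/subsetP => pq; rewrite inE => /andP [].
have lower : (n - d) * k.+1 <= \sum_(pq in PP) #|[set u in ~: D | R u pq]|.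
  rewrite -card_incidences -card_compl_core -sum_nat_const; apply: leq_sum => u uD.
  have := card_agreeing_pairs packS uD.
  have -> : [set pq in setX S S | (pq.1 != pq.2) && (u \in agreeing pq.1 pq.2)] =
            [set pq in PP | R u pq] by apply/setP => pq; rewrite /R !inE andbA.
  by rewrite cS; lia.
have : (n - d) * k.+1 <= 2 * k.+1 * (2 * k.+1) * #|agreeing b1 b2|.
  apply: leq_trans lower (leq_trans avg (leq_mul cPP _)).
  by apply/subset_leq_card/subsetP => u; rewrite inE => /andP [].
by rewrite [X in _ <= X](_ : _ = 4 * k.+1 * #|agreeing b1 b2| * k.+1) ?leq_pmul2r //; lia.
Qed.

Lemma no_uniform_sunflower b1 b2 Ta : b1 != b2 -> packing s (~: D) [set b1; b2] ->
  {in D, forall v, col v b1 = col v b2} ->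
  packing s (agreeing b1 b2) Ta -> #|Ta| = t - 2 ->
  {in b1 :|: b2, forall w, {in Ta &, forall Y Z, col w Y = col w Z}} -> False.
Proof.
move=> nb packB constD packT cT constW; have s_gt0 : 0 < s by rewrite subn_gt0.
have [b1B b2B] := (set21 b1 b2, set22 b1 b2).
have [[b1D cb1] [b2D cb2]] := (packB.1 b1 b1B, packB.1 b2 b2B).
have packB' := packing_pair (packB.2 b1 b2 b1B b2B nb) cb1 cb2.
have grounds : [disjoint b1 :|: b2 & agreeing b1 b2].
  rewrite disjoint_sym disjoints_subset; apply/subsetP => u; rewrite !inE !negb_or.
  by case/andP => /and3P [_ -> ->].
set Pet := [set b1; b2] :|: Ta.
have packP : packing s (~: D) Pet.
  apply: packing_supset (packing_setU grounds packB' packT).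
  rewrite !subUset b1D b2D /=; apply/subsetP => u; rewrite !inE => /andP [].
  by rewrite negb_or => /andP [].
have cPet : #|Pet| = t.
  by rewrite (card_packing_setU s_gt0 grounds packB' packT) cards2 nb cT; lia.
have [u uV inj] := rainbow_vertex packP cPet.
have neq : col u b1 != col u b2.
  by apply: contra_neq nb; apply: inj; rewrite inE ?b1B ?b2B.
case/setUP: uV => [uD | /bigcupP [Y /setUP [YB | YT] uY]].
- by rewrite constD ?eqxx in neq.
- have uB : u \in b1 :|: b2 by case/set2P: YB uY => ->; rewrite inE => ->; rewrite ?orbT.
  have /card_gt1P [Y1 [Z1 [Y1T Z1T nYZ1]]] : 1 < #|Ta| by rewrite cT; lia.
  have eYZ1 : Y1 = Z1 by apply: inj; rewrite ?inE ?Y1T ?Z1T ?orbT //; exact: constW.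
  by rewrite eYZ1 eqxx in nYZ1.
- have := subsetP (packT.1 Y YT).1 u uY.
  by rewrite inE (negbTE neq) andbF.
Qed.

Lemma no_local_coloring_above_threshold : sunflower_threshold r d t k <= n -> False.
Proof.
rewrite /sunflower_threshold => large.
have le_dn : d + s * (k ^ d * (2 * k.+1)) <= n := leq_trans (leq_addr _ _) large.
have room : s * (k ^ #|D| * (2 * k.+1)) <= #|~: D|.
  by rewrite card_compl_core cardD leq_subRL // (leq_trans (leq_addr _ d) le_dn).
have [S [packS cS] constD] := uniform_packing (subxx (~: D)) room.
have [b1 [b2 [b1S b2S nb many]]] := popular_pair packS cS.
have agD : agreeing b1 b2 \subset ~: D.
  by apply/subsetP => u; rewrite !inE negb_or => /andP [/andP [->]].
have cW : #|b1 :|: b2| <= 2 * s.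
  apply: leq_trans (leq_card_setU b1 b2) _.
  by rewrite (packS.1 b1 b1S).2 (packS.1 b2 b2S).2 addnn mul2n.
have room' : s * (k ^ #|b1 :|: b2| * (t - 2)) <= #|agreeing b1 b2|.
  apply: leq_trans (_ : s * (k ^ (2 * s) * (t - 2)) <= _).
    by rewrite leq_mul2l leq_mul2r leq_pexp2l ?cW ?orbT.
  rewrite -(@leq_pmul2l (4 * k.+1)) //; apply: leq_trans many.
  rewrite leq_subRL ?(leq_trans (leq_addr _ d) le_dn) //.
  by apply: leq_trans large; rewrite -addnA leq_add2l leq_addl.
have [Ta [packT cT] constW] := uniform_packing agD room'.
apply: no_uniform_sunflower nb _ _ packT cT constW.
  by apply: packing_subfamily packS; rewrite subUset !sub1set b1S b2S.
by move=> v vD; apply: constD.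
Qed.

End SunflowerColoring.

Lemma local_coloring_lt_threshold n r d t k f : 4 <= t -> d < r -> 0 < k ->
  local_coloring n r d t k f -> n < sunflower_threshold r d t k.
Proof.
move=> t_ge4 d_lt_r k_gt0 f_loc; rewrite ltnNge; apply/negP => large.
have d_le_n : d <= #|[set: 'I_n]|.
  by rewrite cardsT card_ord (leq_trans _ large) // /sunflower_threshold -addnA leq_addr.
have [D _ cardD] := exists_subset_card d_le_n.
exact: (no_local_coloring_above_threshold t_ge4 d_lt_r k_gt0 f_loc cardD large).
Qed.

Lemma sunflower_threshold_le_power r d t k : d < r -> 0 < k ->
  sunflower_threshold r d t k <= r * (5 + 8 * t) * k ^ maxn (d + 1) (2 * (r - d) + 1).
Proof.
move=> d_lt_r k_gt0; rewrite /sunflower_threshold; set s := r - d; set e := maxn _ _.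
have le_d : k ^ d * k <= k ^ e by rewrite -expnSr leq_pexp2l // -addn1 leq_maxl.
have le_2s : k ^ (2 * s) * k <= k ^ e by rewrite -expnSr leq_pexp2l // -addn1 leq_maxr.
have pos_d : 0 < k ^ d by rewrite expn_gt0 k_gt0.
have s_le_r : s <= r by rewrite leq_subr.
move: le_d le_2s pos_d s_le_r.
generalize (k ^ d) (k ^ (2 * s)) (k ^ e) => x y K le_d le_2s pos_d s_le_r.
have core : d + s * (x * (2 * k.+1)) <= 5 * (r * K) by nia.
have petals : 4 * k.+1 * (s * (y * (t - 2))) <= 8 * (r * t * K).
  have -> : 4 * k.+1 * (s * (y * (t - 2))) = 4 * (s * (t - 2)) * (k.+1 * y) by lia.
  have : s * (t - 2) <= r * t by apply: leq_mul => //; apply: leq_subr.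
  have : k.+1 * y <= 2 * K by nia.
  nia.
have -> : r * (5 + 8 * t) * K = 5 * (r * K) + 8 * (r * t * K) by lia.
lia.
Qed.

Lemma has_local_coloring_injective n r d t :
  0 < r -> 0 < t -> has_local_coloring n r d t #|{set 'I_n}|.
Proof.
move=> r_gt0 t_gt0; exists (fun _ e => val (enum_rank e)); split=> [v e _ | E [sE [cE _]]].
  exact: ltn_ord.
have /card_gt0P [e eE] : 0 < #|E| by rewrite cE.
have /card_gt0P [u ue] : 0 < #|e| by move/subsetP: sE => /(_ e eE); rewrite inE => /eqP ->.
exists u; first by apply/bigcupP; exists e.
by move=> x y _ _ /val_inj /enum_rank_inj.
Qed.

Lemma C_sun_spec n r d t :
  (exists k, has_local_coloring n r d t k) -> has_local_coloring n r d t (C_sun n r d t).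
Proof.
move=> [k Hk]; rewrite /C_sun /has_local_coloringb.
case: excluded_middle_informative => [ex | []]; last first.
  by exists k; case: excluded_middle_informative.
by case: ex_minnP => m; case: excluded_middle_informative.
Qed.

Lemma local_coloring_gt0 n r d t k f :
  0 < r -> r <= n -> local_coloring n r d t k f -> 0 < k.
Proof.
move=> r_gt0 r_le_n [f_lt _].
have [e _ ce] : exists2 e : {set 'I_n}, e \subset [set: 'I_n] & #|e| = r.
  by apply: exists_subset_card; rewrite cardsT card_ord.
have v : 'I_n by exists 0; apply: leq_trans r_gt0 r_le_n.
have : e \in rsets n r by rewrite inE ce.
by move/(f_lt v); apply: leq_trans.
Qed.

From Stdlib Require Import Reals Lra.

Open Scope R_scope.

Lemma INR_expn (k e : nat) : INR (expn k e) = INR k ^ e.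
Proof. by elim: e => [|e IH] //=; rewrite expnS mult_INR IH. Qed.

Lemma root_le_of_le_mul_expn (n k e B : nat) :
  (0 < n)%nat -> (0 < k)%nat -> (0 < e)%nat -> (0 < B)%nat -> (n <= B * expn k e)%nat ->
  / INR B * Rpower (INR n) (/ INR e) <= INR k.
Proof.
have INR_ge1 m : (0 < m)%nat -> 1 <= INR m by move=> m_gt0; apply: (le_INR 1); apply/leP.
move=> /INR_ge1 n_ge1 /INR_ge1 k_ge1 /INR_ge1 e_ge1 /INR_ge1 B_ge1 le_n.
have le_nR : INR n <= INR B * INR k ^ e by rewrite -INR_expn -mult_INR; apply/le_INR/leP.
have inv_e : 0 < / INR e <= 1.
  by split; [apply: Rinv_0_lt_compat; lra | rewrite -Rinv_1; apply: Rinv_le_contravar; lra].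
have root_B : Rpower (INR B) (/ INR e) <= INR B.
  by rewrite -{2}(Rpower_1 (INR B)); [apply: Rle_Rpower; lra | lra].
have root_k : Rpower (INR k ^ e) (/ INR e) = INR k.
  by rewrite -Rpower_pow ?Rpower_mult ?Rinv_r ?Rpower_1; lra.
have root_n : Rpower (INR n) (/ INR e) <= Rpower (INR B) (/ INR e) * INR k.
  rewrite -root_k Rpower_mult_distr; [| lra | apply: pow_lt; lra].
  by apply: Rle_Rpower_l; lra.
apply: (Rmult_le_reg_l (INR B)); first lra.
rewrite -Rmult_assoc Rinv_r ?Rmult_1_l; nra.
Qed.

Theorem theorem4 :
  forall t r : nat, leq 4 t -> leq 3 r ->
  exists c : R, 0 < c /\
    forall d n : nat, leq d (r - 1)%nat -> leq r n ->
      Rmin (c * Rpower (INR n) (/ INR (2 * (r - d) + 1)%nat))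
           (c * Rpower (INR n) (/ INR (d + 1)%nat))
      <= INR (C_sun n r d t).
Proof.
move=> t r t_ge4 r_ge3.
have B_gt0 : (0 < r * (5 + 8 * t))%nat by rewrite muln_gt0 (leq_trans _ r_ge3).
exists (/ INR (r * (5 + 8 * t))); split; first by apply/Rinv_0_lt_compat/lt_0_INR/ltP.
move=> d n d_le_r1 r_le_n.
have d_lt_r : (d < r)%nat by move: d_le_r1 r_ge3; clear; lia.
have r_gt0 : (0 < r)%nat by move: r_ge3; clear; lia.
have t_gt0 : (0 < t)%nat by move: t_ge4; clear; lia.
have [f f_loc] := C_sun_spec (ex_intro _ _ (has_local_coloring_injective n d r_gt0 t_gt0)).
have k_gt0 := local_coloring_gt0 r_gt0 r_le_n f_loc.
have le_n := ltnW (leq_trans (local_coloring_lt_threshold t_ge4 d_lt_r k_gt0 f_loc)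
                             (sunflower_threshold_le_power t d_lt_r k_gt0)).
have n_gt0 : (0 < n)%nat by apply: leq_trans r_le_n.
(* [leqP] also resolves the [maxn] exponent in [le_n]. *)
move: le_n; case: (leqP (d + 1) (2 * (r - d) + 1)) => _ le_n.
  by apply: Rle_trans (Rmin_l _ _) _; apply: root_le_of_le_mul_expn; rewrite // addn1.
by apply: Rle_trans (Rmin_r _ _) _; apply: root_le_of_le_mul_expn; rewrite // addn1.
Qed.
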